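(* Let $m\ge2$, $n=2m+1$, $A_i$ ($i=2,\dots,m$) and $B$ as follows: $A_i=E_i+E_{m+i}+E_{i-1,n}+E_{m+i-1,n}$ for $2\le i\le m-1$, $A_m=E_m-E_{2m}+E_{m-1,n}+E_{2m-1,n}$, $B=I_{m+1}\oplus0_m$. Let $i\in\{1,\dots,m\}$ and let $(Y_1,\dots,Y_i)$ be a strict facial reduction sequence for $\mathcal S^n_+$ all of whose members lie in $\operatorname{lin}\{B,A_2,\dots,A_m\}$. Then $$\mathcal S^n_+\cap Y_1^\perp\cap\dots\cap Y_i^\perp=0_{m+i}\oplus\mathcal S^{m-i+1}_+ .$$
   Context: $E_{ij}\in\mathcal S^n$ has only nonzero entries $1$ in positions $(i,j),(j,i)$; $E_i:=E_{ii}$; orthogonality is with respect to $S\bullet T=\operatorname{trace}(ST)$. For a closed convex cone $K$, $K^*=\{y:\langle y,x\rangle\ge0\ \forall x\in K\}$. A facial reduction sequence for $K$ is $(y_1,\dots,y_k)$ such that, with $F_0=K$ and $F_j=F_{j-1}\cap y_j^\perp$, $y_j\in F_{j-1}^*$ for all $j$; it is strict if moreover $y_j\notin F_{j-1}^\perp$ for all $j$. $0_k\oplus\mathcal S^{l}_+$ denotes matrices whose first $k$ rows and columns are zero and whose lower right $l\times l$ block is positive semidefinite. *)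

From HB Require Import structures.
From mathcomp Require Import all_boot all_order all_algebra.
Set Implicit Arguments. Unset Strict Implicit. Unset Printing Implicit Defensive.
Import Order.TTheory GRing.Theory Num.Theory.
Local Open Scope ring_scope.

Section Defs.
Variable R : rcfType.

Definition symm N (X : 'M[R]_N) : Prop := X^T = X.

Definition psd N (X : 'M[R]_N) : Prop :=
  symm X /\ forall v : 'cV[R]_N, 0 <= (v^T *m X *m v) 0 0.

Definition tdot N (S T : 'M[R]_N) : R := \tr (S *m T).

(* E_{pq} with 1-based positions p q: ones at (p,q) and (q,p); E_p := E_{pp}. *)
Definition Emx N (p q : nat) : 'M[R]_N :=
  \matrix_(k, l) ((((k.+1 == p) && (l.+1 == q)) || ((k.+1 == q) && (l.+1 == p)))%:R : R).

Definition A_mx (m i : nat) : 'M[R]_(m.*2.+1) :=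
  let n := m.*2.+1 in
  if i == m then Emx _ m m - Emx _ (m.*2) (m.*2) + Emx _ m.-1 n + Emx _ (m.*2).-1 n
  else Emx _ i i + Emx _ (m + i) (m + i) + Emx _ i.-1 n + Emx _ (m + i).-1 n.

Definition B_mx (m : nat) : 'M[R]_(m.*2.+1) :=
  \matrix_(k, l) (((k == l) && (k < m.+1)%N)%:R : R).

Definition in_lin (m : nat) (Y : 'M[R]_(m.*2.+1)) : Prop :=
  exists (b : R) (c : nat -> R),
    Y = b *: B_mx m + \sum_(2 <= k < m.+1) c k *: A_mx m k.

Definition dualc N (F : 'M[R]_N -> Prop) (Y : 'M[R]_N) : Prop :=
  symm Y /\ forall X, F X -> 0 <= tdot Y X.
Definition perpc N (F : 'M[R]_N -> Prop) (Y : 'M[R]_N) : Prop :=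
  symm Y /\ forall X, F X -> tdot Y X = 0.

Definition face N (Ys : seq 'M[R]_N) (X : 'M[R]_N) : Prop :=
  psd X /\ forall Y, Y \in Ys -> tdot Y X = 0.

Definition strict_frs N (Ys : seq 'M[R]_N) : Prop :=
  forall j, (j < size Ys)%N ->
    dualc (face (take j Ys)) (nth 0 Ys j) /\
    ~ perpc (face (take j Ys)) (nth 0 Ys j).

(* lower-right block of X : 'M_(N+1) starting at (0-based) index k *)
Definition lowblock N (k : nat) (X : 'M[R]_N.+1) : 'M[R]_(N.+1 - k) :=
  \matrix_(a, b) X (inord (k + a)) (inord (k + b)).

Definition zero_oplus_psd N (k : nat) (X : 'M[R]_N.+1) : Prop :=
  (forall a b : 'I_N.+1, ((a < k)%N || (b < k)%N) -> X a b = 0) /\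
  psd (lowblock k X).

End Defs.

(* For k <= n let Z_k be the psd matrices whose first k diagonal entries
   vanish.  A psd matrix with a zero diagonal entry has a zero row and column,
   so Z_k = 0_k (+) S^{n-k}_+ ([zface_zero_oplus_psd]).  The theorem is
   F_i = Z_{m+i}, proved by induction from F_0 = S^n_+ = Z_0 through
       Z_0 --Y_1--> Z_{m+1}  ([first_step]),
       Z_{m+j} --Y_{j+1}--> Z_{m+j+1} for 1 <= j < m  ([next_step]).
   Write Y = b B + sum_k c_k A_k in the dual of the current face Z_p.  Testing
   Y against the rank-one matrices v v^T of Z_p shows that the form of Y is
   nonnegative on vectors supported beyond position p.  Since Y_{nn} = 0, the
   last row of Y vanishes beyond p; it carries c_k at position m+k-1, so c_k = 0
   whenever m+k-1 > p ([lin_coeff_vanish]).  What is left pairs with X in the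
   face as b tr X_{[1..m+1]} (first step), resp. Y_{m+j+1,m+j+1} X_{m+j+1,m+j+1}
   (later steps); strictness makes the weight positive, and Y^perp cuts out
   the next Z.  Indices in the code are 0-based. *)

From HB Require Import structures.
From mathcomp Require Import all_boot all_order all_algebra zify ring lra.
Import Order.TTheory GRing.Theory Num.Theory.
Local Open Scope ring_scope.
Set Implicit Arguments. Unset Strict Implicit.

Section Quadratic.
Variable R : rcfType.

Definition qform n (Y : 'M[R]_n) (v : 'cV[R]_n) : R := (v^T *m Y *m v) 0 0.

Lemma qformE n (Y : 'M[R]_n) v :
  qform Y v = \sum_b (\sum_a v a 0 * Y a b) * v b 0.
Proof.
rewrite /qform mxE; apply: eq_bigr => b _; rewrite mxE; congr (_ * _).
by apply: eq_bigr => a _; rewrite mxE.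
Qed.

Lemma tdotE n (Y X : 'M[R]_n) : tdot Y X = \sum_a \sum_b Y a b * X b a.
Proof. by rewrite /tdot /mxtrace; apply: eq_bigr => a _; rewrite mxE. Qed.

Lemma tdot_rank1 n (Y : 'M[R]_n) v : tdot Y (v *m v^T) = qform Y v.
Proof. by rewrite /tdot mulmxA mxtrace_mulC /qform mulmxA /mxtrace big_ord1. Qed.

Lemma delta_qform n (X : 'M[R]_n) a b :
  delta_mx 0 a *m X *m delta_mx b 0 = (X a b)%:M :> 'M[R]_1.
Proof. by apply/matrixP => i j; rewrite !ord1 -rowE -colE !mxE /= mulr1n. Qed.

Lemma qform_pair n (X : 'M[R]_n) a b x y : symm X ->
  qform X (x *: delta_mx a 0 + y *: delta_mx b 0) =
  x * x * X a a + 2 * x * y * X a b + y * y * X b b.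
Proof.
move=> hs; have hba : X b a = X a b by rewrite -{1}hs mxE.
rewrite /qform; have -> : (x *: delta_mx a 0 + y *: delta_mx b 0)^T =
          x *: delta_mx 0 a + y *: (delta_mx 0 b : 'rV[R]_n).
  apply/matrixP => i j; rewrite !mxE.
  by case: (i == 0) (j == a) (j == b) => [] [] [].
rewrite !mulmxDl !mulmxDr -!scalemxAl -!scalemxAr !delta_qform !mxE /=.
by rewrite !mulr1n hba; ring.
Qed.

(* The form at a unit vector e_a, written as a degenerate pair. *)
Lemma qform_unit n (X : 'M[R]_n) a : symm X ->
  qform X (1 *: delta_mx a 0 + 0 *: delta_mx a 0) = X a a.
Proof. by move=> hs; rewrite qform_pair //; ring. Qed.

Lemma pair_nonneg_zero_diag n (Y : 'M[R]_n) a b : symm Y ->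
  (forall x y, 0 <= qform Y (x *: delta_mx a 0 + y *: delta_mx b 0)) ->
  Y a a = 0 -> Y a b = 0.
Proof.
move=> hs hq h0.
have hbb := hq 0 1; rewrite qform_pair // h0 in hbb.
have hneg := hq (- (Y b b + 1)) (Y a b); rewrite qform_pair // h0 in hneg.
have hsq : Y a b * Y a b <= 0 by nra.
by apply/eqP; rewrite -sqrf_eq0 eq_le sqr_ge0 andbT expr2.
Qed.

Lemma psd_zero_diag_row n (X : 'M[R]_n) a b : psd X -> X a a = 0 -> X a b = 0.
Proof.
by move=> [hs hq] h0; apply: pair_nonneg_zero_diag => // x y; apply: hq.
Qed.

End Quadratic.

Section ZeroFaces.
Variable R : rcfType.

(* Z_k: psd matrices whose first k diagonal entries vanish; the faces of S^n_+
   visited by the reduction. *)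
Definition zface n k (X : 'M[R]_n) : Prop :=
  psd X /\ forall a : 'I_n, (a < k)%N -> X a a = 0.

Definition supported_from n p (v : 'cV[R]_n) : Prop :=
  forall a : 'I_n, (a < p)%N -> v a 0 = 0.

Lemma zface0 n (X : 'M[R]_n) : zface 0 X <-> psd X.
Proof. by split=> [[]|hX]. Qed.

Lemma zface_zero n k (X : 'M[R]_n) (a b : 'I_n) :
  zface k X -> ((a < k) || (b < k))%N -> X a b = 0.
Proof.
move=> [hp hd] /orP [h|h]; first by apply: psd_zero_diag_row => //; apply: hd.
by rewrite -hp.1 mxE; apply: psd_zero_diag_row => //; apply: hd.
Qed.

Lemma rank1_zface n p (v : 'cV[R]_n) :
  supported_from p v -> zface p (v *m v^T).
Proof.
move=> hv; split; last by move=> a ha; rewrite mxE big_ord1 mxE hv ?mul0r.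
split; first by rewrite /symm trmx_mul trmxK.
move=> w; rewrite !mulmxA -(mulmxA _ v^T) mxE big_ord1.
have -> : (v^T *m w) 0 0 = (w^T *m v) 0 0.
  by rewrite -(trmxK (v^T *m w)) trmx_mul trmxK mxE.
by rewrite -expr2 sqr_ge0.
Qed.

(* A dual element of Z_p has a nonnegative quadratic form on vectors supported
   beyond p, by testing against rank-one members of Z_p. *)
Lemma dual_zface_qform n p (F : 'M[R]_n -> Prop) Y :
  (forall X, F X <-> zface p X) -> dualc F Y ->
  forall v, supported_from p v -> 0 <= qform Y v.
Proof.
by move=> hF [_ hd] v hv; rewrite -tdot_rank1; apply/hd/hF/rank1_zface.
Qed.

Lemma pair_supported n p (a b : 'I_n) x y : (p <= a)%N -> (p <= b)%N ->
  supported_from p (x *: delta_mx a 0 + y *: delta_mx b 0 : 'cV[R]_n).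
Proof.
move=> ha hb c hc; rewrite !mxE.
have -> : (c == a) = false by apply/negbTE; rewrite -val_eqE /=; lia.
have -> : (c == b) = false by apply/negbTE; rewrite -val_eqE /=; lia.
by rewrite /= !mulr0n !mulr0 addr0.
Qed.

Lemma tdot_diag n (Y X : 'M[R]_n) :
  (forall a b, a != b -> Y a b * X b a = 0) ->
  tdot Y X = \sum_a Y a a * X a a.
Proof.
move=> h; rewrite tdotE; apply: eq_bigr => a _.
by rewrite (bigD1 a) //= big1 ?addr0 // => b hb; apply: h; rewrite eq_sym.
Qed.

Lemma sum_drop_prefix N k (F : 'I_N.+1 -> R) : (k <= N.+1)%N ->
  (forall i : 'I_N.+1, (i < k)%N -> F i = 0) ->
  \sum_i F i = \sum_(a < N.+1 - k) F (inord (k + a)).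
Proof.
move=> hk h.
have -> : \sum_i F i = \sum_(i < N.+1) F (inord i).
  by apply: eq_bigr => i _; rewrite inord_val.
rewrite -(big_mkord xpredT (fun i => F (inord i))) (big_cat_nat (leq0n k) hk) /=.
rewrite big_nat big1 ?add0r; last first.
  by move=> i /andP [_ hi]; apply: h; rewrite inordK //; lia.
rewrite -{1}(add0n k) big_addn -(big_mkord xpredT (fun a => F (inord (k + a)))).
by apply: eq_bigr => i _; rewrite addnC.
Qed.

Definition lower_col N k (v : 'cV[R]_N.+1) : 'cV[R]_(N.+1 - k) :=
  \col_a v (inord (k + a)) 0.

Definition lift_col N k (w : 'cV[R]_(N.+1 - k)) : 'cV[R]_N.+1 :=
  \col_i \sum_(a < N.+1 - k | (k + a == i)%N) w a 0.

Lemma lower_liftK N k : cancel (@lift_col N k) (@lower_col N k).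
Proof.
move=> w; apply/matrixP => a j; rewrite !ord1 !mxE.
have ha : (k + a < N.+1)%N by have := ltn_ord a; lia.
rewrite inordK // (eq_bigl (fun a' => a' == a)) ?big_pred1_eq // => a'.
by rewrite eqn_add2l.
Qed.

Lemma qform_lowblock N k (X : 'M[R]_N.+1) v : (k <= N.+1)%N ->
  (forall a b : 'I_N.+1, ((a < k) || (b < k))%N -> X a b = 0) ->
  qform X v = qform (lowblock k X) (lower_col k v).
Proof.
move=> hk hX; rewrite !qformE (@sum_drop_prefix N k) //; last first.
  by move=> b hb; rewrite big1 ?mul0r // => a _; rewrite hX ?mulr0 // hb orbT.
apply: eq_bigr => b _; rewrite mxE; congr (_ * _).
rewrite (@sum_drop_prefix N k) //; last by move=> a ha; rewrite hX ?mulr0 // ha.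
by apply: eq_bigr => a _; rewrite !mxE.
Qed.

Lemma ord_shift N k (a : 'I_N.+1) : (k <= a)%N ->
  exists a' : 'I_(N.+1 - k), a = inord (k + a').
Proof.
move=> h; have h' : (a - k < N.+1 - k)%N by have := ltn_ord a; lia.
by exists (Ordinal h'); apply: val_inj; rewrite /= inordK /=; lia.
Qed.

Lemma zface_zero_oplus_psd N k (X : 'M[R]_N.+1) : (k <= N.+1)%N ->
  zface k X <-> zero_oplus_psd k X.
Proof.
move=> hk; split=> [hZ|[hz [hs hq]]].
- have hz := zface_zero hZ; split=> //; split.
    by apply/matrixP => a b; rewrite !mxE -{1}hZ.1.1 mxE.
  move=> w; rewrite -/(qform _ _) -{1}(lower_liftK w) -qform_lowblock //.
  exact: hZ.1.2.
- split; last by move=> a ha; apply: hz; rewrite ha.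
  split; last first.
    by move=> v; rewrite -/(qform _ _) (qform_lowblock _ hk) //; apply: hq.
  apply/matrixP => a b; rewrite mxE.
  have [h|h] := boolP ((a < k) || (b < k))%N; first by rewrite !hz // orbC.
  have [ha hb] : (k <= a /\ k <= b)%N by lia.
  have [a' ->] := ord_shift ha; have [b' ->] := ord_shift hb.
  by have := congr1 (fun M : 'M[R]_(N.+1 - k) => M b' a') hs; rewrite !mxE.
Qed.

End ZeroFaces.

Ltac eval_indicators := repeat match goal with |- context [ nat_of_bool ?b ] =>
  first [ have -> : b = false by lia | have -> : b = true by lia ] end.

Section Generators.
Variable R : rcfType.
Variable m : nat.
Local Notation n := (m.*2.+1).
Local Notation A := (A_mx R m).

Lemma A_corner l : (2 <= l <= m)%N -> A l ord_max ord_max = 0.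
Proof.
by move=> hl; rewrite /A_mx; case: ifP => hlm; rewrite !mxE /=;
  eval_indicators; rewrite /=; ring.
Qed.

Lemma A_last_col l k (u : 'I_n) : (2 <= l <= m)%N -> (2 <= k <= m)%N ->
  val u = (m + k - 2)%N -> A l u ord_max = (l == k)%:R.
Proof.
move=> hl hk /= hu; rewrite /A_mx; case: ifP => hlm; rewrite !mxE /=;
  by case: (boolP (l == k)) => hlk; eval_indicators; rewrite /=; ring.
Qed.

Lemma A_tail l j (a b : 'I_n) : (2 <= l <= j)%N -> (j <= m)%N ->
  (m + j - 1 <= a)%N -> (m + j - 1 <= b)%N ->
  ~~ ((val a == m + j - 1) && (val b == m + j - 1))%N -> A l a b = 0.
Proof.
move=> hl hj ha hb /= hab; rewrite /A_mx.
by case: ifP => hlm; rewrite !mxE /=; eval_indicators; rewrite /=; ring.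
Qed.

Variables (be : R) (c : nat -> R).
Let Y : 'M[R]_n := be *: B_mx R m + \sum_(2 <= k < m.+1) c k *: A k.

Lemma lin_entry (a a' : 'I_n) :
  Y a a' = be * B_mx R m a a' + \sum_(2 <= k < m.+1) c k * A k a a'.
Proof.
by rewrite /Y !mxE summxE; congr (_ + _); apply: eq_bigr => k _; rewrite mxE.
Qed.

Lemma lin_last_col k (u : 'I_n) : (2 <= k <= m)%N ->
  val u = (m + k - 2)%N -> Y u ord_max = c k.
Proof.
move=> hk hu; rewrite lin_entry !mxE /=.
rewrite (_ : (u == ord_max) = false) ?andFb ?mulr0 ?add0r; last first.
  by apply/negbTE; rewrite -val_eqE /= hu; lia.
have hk' : k \in index_iota 2 m.+1 by rewrite mem_index_iota; lia.
rewrite (bigD1_seq k hk' (iota_uniq _ _)) /=.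
rewrite (A_last_col hk hk hu) eqxx mulr1 big_seq_cond big1 ?addr0 // => l.
move=> /andP [hl1 hl2]; rewrite mem_index_iota in hl1.
by rewrite (@A_last_col l k u) ?(negbTE hl2) ?mulr0 //; lia.
Qed.

Lemma lin_tail j (a b : 'I_n) : (2 <= j <= m)%N ->
  (forall l, (j < l <= m)%N -> c l = 0) ->
  (m + j - 1 <= a)%N -> (m + j - 1 <= b)%N ->
  ~~ ((val a == m + j - 1) && (val b == m + j - 1))%N -> Y a b = 0.
Proof.
move=> hj hc ha hb hab; rewrite lin_entry !mxE /=.
rewrite (_ : (a < m.+1)%N = false) ?andbF ?mulr0 ?add0r; last by lia.
rewrite big_nat big1 // => l /andP [hl1 hl2].
have [hlj|hjl] := leqP l j; first by rewrite (@A_tail l j) ?mulr0 //; lia.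
by rewrite hc ?mul0r //; lia.
Qed.

Lemma lin_B_only (a b : 'I_n) : (forall l, (2 <= l <= m)%N -> c l = 0) ->
  Y a b = be * B_mx R m a b.
Proof.
move=> hc; rewrite lin_entry big_nat big1 ?addr0 // => l /andP [hl1 hl2].
by rewrite hc ?mul0r //; lia.
Qed.

Hypothesis hm : (1 <= m)%N.

(* The corner (n, n) of Y is zero; this needs m >= 1 (so that n > m+1). *)
Lemma lin_corner : Y ord_max ord_max = 0.
Proof.
rewrite lin_entry !mxE /= (_ : (m.*2 < m.+1)%N = false) ?andbF ?mulr0 ?add0r;
  last by lia.
by rewrite big_nat big1 // => k /andP [hk1 hk2]; rewrite A_corner ?mulr0 //; lia.
Qed.

Lemma lin_coeff_vanish p : symm Y ->
  (forall v, supported_from p v -> 0 <= qform Y v) ->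
  forall k, (2 <= k <= m)%N -> (p <= m + k - 2)%N -> c k = 0.
Proof.
move=> hs hq k hk hp; pose u : 'I_n := inord (m + k - 2).
have hu : val u = (m + k - 2)%N by rewrite /u /= inordK //; lia.
rewrite -(lin_last_col hk hu) -{1}hs mxE.
apply: pair_nonneg_zero_diag => //; last exact: lin_corner.
by move=> x y; apply/hq/pair_supported; rewrite ?hu /=; lia.
Qed.

End Generators.

Section Reduction.
Variable R : rcfType.
Variable m : nat.
Hypothesis hm : (2 <= m)%N.
Local Notation n := (m.*2.+1).

Lemma face_nil N (X : 'M[R]_N) : face [::] X <-> zface 0 X.
Proof. by rewrite zface0; split=> [[]|hX] //; split=> // Y; rewrite in_nil. Qed.

Lemma face_rcons N (s : seq 'M[R]_N) Y X :
  face (rcons s Y) X <-> face s X /\ tdot Y X = 0.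
Proof.
split=> [[hp h]|[[hp h] ht]].
- split; last by apply: h; rewrite mem_rcons mem_head.
  by split=> // Z hZ; apply: h; rewrite mem_rcons in_cons hZ orbT.
- by split=> // Z; rewrite mem_rcons in_cons => /orP [/eqP ->|/h].
Qed.

(* Strictness: if Y pairs with the face as a nonnegative weight times a fixed
   functional, the weight is positive, since otherwise Y would lie in F^perp. *)
Lemma strict_weight_pos N (F : 'M[R]_N -> Prop) Y w (g : 'M[R]_N -> R) :
  symm Y -> ~ perpc F Y -> (forall X, F X -> tdot Y X = w * g X) ->
  0 <= w -> 0 < w.
Proof.
move=> hs hnp htd; rewrite le_eqVlt => /orP [/eqP hw0|//].
by case: hnp; split=> // X /htd ->; rewrite -hw0 mul0r.
Qed.

(* First reduction step: a strict Y_1 in lin{B, A_k} is a positive multiple of B,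
   and it cuts S^n_+ down to Z_{m+1}. *)
Lemma first_step (Y : 'M[R]_n) (F : 'M[R]_n -> Prop) :
  in_lin Y -> (forall X, F X <-> zface 0 X) -> dualc F Y -> ~ perpc F Y ->
  forall X, (F X /\ tdot Y X = 0) <-> zface (m + 1) X.
Proof.
move=> [be [c hY]] hF hdual hnp; subst Y; have [hs _] := hdual.
set Y := _ + _ in hs hnp hdual *.
have hq := dual_zface_qform hF hdual.
have hc l : (2 <= l <= m)%N -> c l = 0.
  by move=> hl; apply: (lin_coeff_vanish _ hs hq); lia.
have hYB a b : Y a b = be * B_mx R m a b by apply: lin_B_only.
have htd X : tdot Y X = be * \sum_(a < n | (a < m.+1)%N) X a a.
  rewrite tdot_diag; last first.
    by move=> a b hab; rewrite hYB !mxE (negbTE hab) mulr0 mul0r.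
  rewrite mulr_sumr [RHS]big_mkcond; apply: eq_bigr => a _.
  rewrite hYB !mxE eqxx /=.
  by case: (a < m.+1)%N; rewrite /= ?mulr1 ?mulr0 ?mul0r.
have hbe : 0 < be.
  apply: (strict_weight_pos hs hnp (fun X _ => htd X)).
  have := hq _ (pair_supported 1 0 (leq0n ord0) (leq0n ord0)).
  by rewrite qform_unit // hYB !mxE /= mulr1.
move=> X; split=> [[/hF [hp _] ht]|hZ].
- split=> // a ha; move/eqP: ht; rewrite htd mulf_eq0 (gt_eqF hbe) /= => /eqP.
  move/psumr_eq0P; apply; last by lia.
  by move=> b _; rewrite -(qform_unit b hp.1); apply: hp.2.
- split; first by apply/hF; split=> //; case: hZ.
  by rewrite htd big1 ?mulr0 // => a ha; apply: hZ.2; lia.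
Qed.

(* Later steps: on Z_{m+j} a strict Y_{j+1} in lin{B, A_k} pairs only with the
   diagonal entry at position m+j+1, with positive weight, so it cuts Z_{m+j}
   down to Z_{m+j+1}. *)
Lemma next_step j (Y : 'M[R]_n) (F : 'M[R]_n -> Prop) : (1 <= j < m)%N ->
  in_lin Y -> (forall X, F X <-> zface (m + j) X) -> dualc F Y -> ~ perpc F Y ->
  forall X, (F X /\ tdot Y X = 0) <-> zface (m + j.+1) X.
Proof.
move=> hj [be [c hY]] hF hdual hnp; subst Y; have [hs _] := hdual.
set Y := _ + _ in hs hnp hdual *.
have hq := dual_zface_qform hF hdual.
have hc l : (j.+1 < l <= m)%N -> c l = 0.
  by move=> hl; apply: (lin_coeff_vanish _ hs hq); lia.
pose p : 'I_n := inord (m + j).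
have hp : val p = (m + j)%N by rewrite /p /= inordK //; lia.
have hsupp X : zface (m + j) X ->
    forall a b, (a != p) || (b != p) -> Y a b * X b a = 0.
  move=> hX a b hab.
  have [h|h] := boolP ((b < m + j) || (a < m + j))%N.
    by rewrite (zface_zero hX h) mulr0.
  rewrite (@lin_tail R m be c j.+1) ?mul0r //; try lia.
  by move: hab; rewrite -!val_eqE hp /=; lia.
have htd X : zface (m + j) X -> tdot Y X = Y p p * X p p.
  move=> hX; rewrite tdot_diag => [|a b hab]; last first.
    apply: (hsupp _ hX); move: hab.
    by have [->|] //= := eqVneq a p; rewrite eq_sym.
  rewrite (bigD1 p) //= big1 ?addr0 // => a /= hap.
  by apply: (hsupp _ hX); rewrite hap.
have hYp : 0 < Y p p.
  apply: (strict_weight_pos hs hnp (fun X hFX => htd X ((hF X).1 hFX))).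
  rewrite -qform_unit //; apply: hq.
  by apply: pair_supported; rewrite hp.
move=> X; split=> [[/hF hX ht]|hX'].
- have hXp : X p p = 0.
    by move/eqP: ht; rewrite htd // mulf_eq0 (gt_eqF hYp) /= => /eqP.
  split=> [|a ha]; first exact: hX.1.
  have [h|h] := ltnP a (m + j); first exact: hX.2.
  by have -> : a = p by apply: val_inj; rewrite /= hp; lia.
- have hX : zface (m + j) X.
    by split=> [|a ha]; [exact: hX'.1 | apply: hX'.2; lia].
  by split; [apply/hF | rewrite htd // hX'.2 ?mulr0 // hp; lia].
Qed.

End Reduction.

Unset Implicit Arguments.
Set Strict Implicit.

(* By induction, F_j = Z_{m+j} for 1 <= j <= i; then use Z_k = 0_k (+) S_+. *)
Theorem claim2 (R : rcfType) (m : nat) (hm : (2 <= m)%N) (i : nat)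
  (hi1 : (1 <= i)%N) (him : (i <= m)%N) (Ys : seq 'M[R]_(m.*2.+1))
  (hsize : size Ys = i) (hfrs : strict_frs Ys)
  (hlin : forall Y, Y \in Ys -> in_lin Y) :
  forall X : 'M[R]_(m.*2.+1), face Ys X <-> zero_oplus_psd (m + i) X.
Proof.
have faces j : (1 <= j <= i)%N ->
    forall X, face (take j Ys) X <-> zface (m + j) X.
  elim: j => [//|j IH] /andP [hj1 hji].
  have hjs : (j < size Ys)%N by rewrite hsize.
  have [hdual hnp] := hfrs j hjs.
  have hYj := hlin _ (mem_nth 0 hjs).
  move=> X; rewrite (take_nth 0 hjs) face_rcons.
  have [j0|jpos] := posnP j.
    by subst j; apply: first_step => //; rewrite take0 => Z; apply: face_nil.
  by apply: next_step => //; [lia | apply: IH; lia].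
move=> X; rewrite -(take_size Ys) faces ?hsize; last by lia.
by apply: zface_zero_oplus_psd; lia.
Qed.
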